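(* In the max-plus semiring $\mathbb{Q}_{\max}$, the set $$\mathscr{S}=\big\{(u_1,v_1,u_2,v_2)\in\mathbb{Q}_{\max}^4:\ \forall k\in\mathbb{N},\ \max(u_1+kv_1,\ u_2+kv_2)\ge0\big\}$$ (i.e. the set of evaluations $(u_1,v_1,u_2,v_2)$ for which $u_1(v_1X)^*\oplus u_2(v_2X)^*\ge(0X)^*$ coefficientwise) is not semi-polyhedral.
   Context: $\mathbb{Q}_{\max}$ is $\mathbb{Q}\cup\{-\infty\}$ with $a\oplus b=\max(a,b)$ and $a\otimes b=a+b$; the term $u+kv$ denotes the max-plus product $u\otimes v^{\otimes k}$ (with $v^{\otimes 0}=0$, the unit), and the order is the usual order with $-\infty$ smallest. A monomial on $\mathbb{Q}_{\max}^4$ is $m(x)=a\otimes x_1^{\otimes\alpha_1}\otimes\cdots\otimes x_4^{\otimes\alpha_4}$ with $a\in\mathbb{Q}_{\max}$, $\alpha_i\in\mathbb{N}$ (in usual notation $a+\sum_i\alpha_ix_i$); a half-space is $\{x:m(x)\ge m'(x)\}$ for monomials $m,m'$; a polyhedron is a finite intersection of half-spaces; a semi-polyhedral set is a finite union of polyhedra. *)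

From Stdlib Require Import List.
From HB Require Import structures.
From mathcomp Require Import all_boot all_order all_algebra.
Set Implicit Arguments. Unset Strict Implicit. Unset Printing Implicit Defensive.
Import Order.TTheory GRing.Theory Num.Theory.

Inductive qmax : Type := NegInf | Fin of rat.

Definition qmax_add (a b : qmax) : qmax :=
  match a, b with
  | NegInf, _ => b
  | _, NegInf => a
  | Fin x, Fin y => Fin (Num.max x y)
  end.

Definition qmax_mul (a b : qmax) : qmax :=
  match a, b with
  | Fin x, Fin y => Fin (x + y)%R
  | _, _ => NegInf
  end.

Definition qmax_one : qmax := Fin 0%R.

Fixpoint qmax_pow (v : qmax) (k : nat) : qmax :=
  match k with
  | 0 => qmax_one
  | k'.+1 => qmax_mul v (qmax_pow v k')
  end.

Definition qmax_le (a b : qmax) : Prop :=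
  match a, b with
  | NegInf, _ => True
  | Fin _, NegInf => False
  | Fin x, Fin y => (x <= y)%R
  end.

Record monomial (n : nat) := Monomial { mcoef : qmax; mexp : 'I_n -> nat }.

Definition point (n : nat) := 'I_n -> qmax.

Definition meval (n : nat) (m : monomial n) (x : point n) : qmax :=
  foldr (fun i acc => qmax_mul acc (qmax_pow (x i) (mexp m i)))
        (mcoef m) (enum 'I_n).

Definition in_halfspace (n : nat) (h : monomial n * monomial n) (x : point n) : Prop :=
  qmax_le (meval h.2 x) (meval h.1 x).

Definition in_polyhedron (n : nat) (P : seq (monomial n * monomial n)) (x : point n) : Prop :=
  forall h, List.In h P -> in_halfspace h x.

Definition semi_polyhedral (n : nat) (S : point n -> Prop) : Prop :=
  exists Ps : seq (seq (monomial n * monomial n)),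
    forall x, S x <-> exists2 P, List.In P Ps & in_polyhedron P x.

(* The set 𝒮 ⊆ Q_max^4, coordinates (u1, v1, u2, v2) = (x 0, x 1, x 2, x 3). *)
Definition setS (x : point 4) : Prop :=
  forall k : nat,
    qmax_le qmax_one
      (qmax_add (qmax_mul (x (inord 0)) (qmax_pow (x (inord 1)) k))
                (qmax_mul (x (inord 2)) (qmax_pow (x (inord 3)) k))).

(** Restrict everything to the line t |-> (-1 - t, 1, t, -1) of Q_max^4.  Along
    it a point lies in S exactly when no integer lies strictly between t and
    t + 1, so S meets the line in all integers but in no half-integer.  On the
    other hand every max-plus monomial is either -oo or affine in t along the
    line, so a polyhedron meets the line in an interval.  By pigeonhole, N
    intervals covering 0, 1, ..., N contain two integers in a common interval,
    hence also the half-integer that follows the smaller one. *)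
From Stdlib Require Import List.
From mathcomp Require Import all_boot all_order all_algebra.
Set Implicit Arguments. Unset Strict Implicit. Unset Printing Implicit Defensive.
Import Order.TTheory GRing.Theory Num.Theory.
Local Open Scope ring_scope.

Definition order_convex d (T : porderType d) (A : T -> Prop) :=
  forall a b t, A a -> A b -> (a <= t <= b)%O -> A t.

Lemma affine_le_convex (R : realDomainType) (c d c' d' : R) :
  order_convex (fun t => c' + t * d' <= c + t * d).
Proof.
move=> a b t; rewrite -!(subr_ge0 (c' + _ * _)) => ha hb /andP[le_at le_tb].
have E x : c + x * d - (c' + x * d') = c - c' + x * (d - d').
  by rewrite mulrBr opprD addrACA.
rewrite !E in ha hb *; case: (leP 0 (d - d')) => slope.
- by apply: le_trans ha _; rewrite lerD2l ler_wpM2r.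
- by apply: le_trans hb _; rewrite lerD2l ler_wnM2r // ltW.
Qed.

Lemma midpoint_in_cover (R : realFieldType) N (F : 'I_N -> R -> Prop) :
  (forall k, order_convex (F k)) -> (forall i : 'I_N.+1, exists k, F k i%:R) ->
  exists k (i : nat), F k (i%:R + 2^-1).
Proof.
move=> convexF /fin_all_exists[f Ff].
have /injectivePn[i [j neq_ij fij]] : ~~ injectiveb f.
  by apply/negP => /injectiveP/leq_card; rewrite !card_ord ltnn.
wlog lt_ij : i j neq_ij fij / (i < j)%N.
  move=> wlog_ij; case: (ltngtP i j) => [|lt_ji|/val_inj eq_ij].
  - exact: wlog_ij.
  - by apply: (wlog_ij j i) => //; rewrite eq_sym.
  - by rewrite eq_ij eqxx in neq_ij.
exists (f i), i; apply: (convexF _ i%:R j%:R) => //; first by rewrite fij.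
rewrite lerDl invr_ge0 ler0n /=.
apply: le_trans (_ : i%:R + 1 <= _); first by rewrite lerD2l invf_le1 ?ler1n.
by rewrite natr1 ler_nat.
Qed.

Lemma qmax_pow_Fin (c : rat) k : qmax_pow (Fin c) k = Fin (c *+ k).
Proof. by elim: k => [|k IH] //=; rewrite IH mulrS. Qed.

Definition affine_path n (x : rat -> point n) :=
  forall j, exists p q, forall t, x t j = Fin (p + t * q).

Lemma meval_affine n (m : monomial n) (x : rat -> point n) : affine_path x ->
  (forall t, meval m (x t) = NegInf) \/
  exists c d, forall t, meval m (x t) = Fin (c + t * d).
Proof.
move=> affine_x; rewrite /meval; elim: (enum 'I_n) => [|i s IH] /=.
  case: (mcoef m) => [|a]; [by left | right; exists a, 0 => t].
  by rewrite mulr0 addr0.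
case: IH => [IH | [c [d IH]]]; first by left => t; rewrite IH.
right; have [p [q xi]] := affine_x i.
exists (c + p *+ mexp m i), (d + q *+ mexp m i) => t.
by rewrite IH xi qmax_pow_Fin /= mulrnDl mulrDr -mulrnAr addrACA.
Qed.

Lemma halfspace_convex n (h : monomial n * monomial n) (x : rat -> point n) :
  affine_path x -> order_convex (fun t => in_halfspace h (x t)).
Proof.
move=> affine_x a b t; rewrite /in_halfspace.
case: (meval_affine h.2 affine_x) => [mx2 | [c' [d' mx2]]]; first by rewrite !mx2.
case: (meval_affine h.1 affine_x) => [mx1 | [c [d mx1]]]; rewrite !mx1 !mx2 //.
exact: affine_le_convex.
Qed.

Lemma polyhedron_convex n (P : seq (monomial n * monomial n)) (x : rat -> point n) :
  affine_path x -> order_convex (fun t => in_polyhedron P (x t)).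
Proof.
move=> affine_x a b t Pa Pb abt h hP.
exact: halfspace_convex affine_x _ _ _ (Pa h hP) (Pb h hP) abt.
Qed.

Definition probe (t : rat) : point 4 := fun j =>
  Fin (match nat_of_ord j with 0 => -1 - t | 1 => 1 | 2 => t | _ => -1 end).

Lemma probe_affine : affine_path probe.
Proof.
case=> [[|[|[|j]]] ?].
- by exists (-1), (-1) => t; rewrite mulrN1.
- by exists 1, 0 => t; rewrite mulr0 addr0.
- by exists 0, 1 => t; rewrite mulr1 add0r.
- by exists (-1), 0 => t; rewrite mulr0 addr0.
Qed.

Lemma setS_probe t : setS (probe t) <-> forall k : nat, t < k%:R -> t + 1 <= k%:R.
Proof.
rewrite /setS /probe; split=> S_t k; move: (S_t k);
  rewrite !inordK //= !qmax_pow_Fin /= le_max mulNrn subr_ge0 -opprD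
    [_ + k%:R]addrC subr_ge0 [1 + t]addrC ltNge.
- by case/orP=> [-> | ->].
- by case: (k%:R <= t) => [_ | ->]; rewrite ?orbT.
Qed.

Lemma probe_nat_in_setS (n : nat) : setS (probe n%:R).
Proof. by apply/setS_probe => k; rewrite ltr_nat natr1 ler_nat. Qed.

Lemma probe_half_notin_setS (n : nat) : ~ setS (probe (n%:R + 2^-1)).
Proof.
move/setS_probe/(_ n.+1); rewrite -(natr1 n) ltrD2l -addrA lerD2l.
by rewrite invf_lt1 ?ltr1n // gerDr invr_le0 => /(_ isT).
Qed.

Theorem mainTheorem14 : ~ semi_polyhedral setS.
Proof.
move=> [Ps S_Ps].
pose F (k : 'I_(length Ps)) t := in_polyhedron (List.nth k Ps [::]) (probe t).
have [k [i Fki]] : exists k (i : nat), F k (i%:R + 2^-1).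
  apply: midpoint_in_cover => [k | i]; first exact: polyhedron_convex probe_affine.
  have /S_Ps[P PPs Pi] := probe_nat_in_setS i.
  have [k [lt_k nth_k]] := List.In_nth _ _ [::] PPs.
  by exists (Ordinal (introT ssrnat.ltP lt_k)); rewrite /F nth_k.
apply: (@probe_half_notin_setS i); apply/S_Ps.
by exists (List.nth k Ps [::]); [exact/List.nth_In/ssrnat.ltP | exact: Fki].
Qed.
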